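(* Let $K$ be a virtual knot and $r\geq 2$ an integer, and let $L(K;r)=K_1\cup\dots\cup K_r$ be the $r$-multiplexed virtual link of $K$. Then for all integers $i,j$ with $1\leq i\neq j\leq r$, \[\mathrm{Lk}(K_i,K_j)=\sum_{n\equiv i-j \pmod r} J_n(K).\]
   Context: Virtual link diagrams have real (positive/negative) and virtual crossings; virtual links are equivalence classes under generalized Reidemeister moves (R1–R3, VR1–VR4). $r$-multiplexing: for a virtual knot diagram $D$ and $r\geq2$, $L(D;r)$ is obtained by replacing $D$ with a bundle of $r$ parallel strands, positions numbered $1,\dots,r$ left to right w.r.t. the orientation. At each positive (resp. negative) crossing of $D$ the two bundles cross in an $r\times r$ grid where the position-$p$ strand of the over-bundle crosses the position-$p$ strand of the under-bundle at a positive (resp. negative) real crossing with the over-bundle strand on top, all other grid crossings being virtual. At each virtual crossing of $D$ the bundles cross in an $r\times r$ grid of virtual crossings, and each bundle additionally has its strands cyclically shifted via $r-1$ virtual crossings: position $p$ goes to $p-1\pmod r$ if the other string of $D$ crosses the bundle from left to right, and to $p+1 \pmod r$ if from right to left. The result has $r$ components; with a base point on $D$, the $i$th component is the one through position $i$ there. The equivalence class $L(K;r)$ of $L(D;r)$ for a diagram $D$ of $K$ is independent of $D$. Index: for a real crossing $c$ of a diagram, its specified path $\rho$ runs along the diagram from the overcrossing to the undercrossing at $c$; walking along $\rho$, each real crossing on $\rho$ contributes $+1$ if the other string crosses $\rho$ from left to right and $-1$ otherwise; $\mathrm{ind}(c)$ is the sum. For a virtual knot diagram $D$ and integer $n$,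 $J_n(D)$ is the sum of signs of real crossings of index $n$; for $n\neq0$ it is an invariant $J_n(K)$ of the virtual knot $K$ (the $n$-writhe). $(i,j)$-linking number: for a diagram $D_1\cup\dots\cup D_r$ of a virtual link and $i\neq j$, $\mathrm{Lk}(K_i,K_j)$ is the sum of signs of real crossings where $D_i$ passes over $D_j$; it is a virtual link invariant. *)

From mathcomp Require Import all_boot all_order all_algebra.
Set Implicit Arguments. Unset Strict Implicit. Unset Printing Implicit Defensive.
Import GRing.Theory Num.Theory.

(* Walking along the oriented diagram from a base point, one meets the      *)
(* crossings (real and virtual) in "passages" 0, 1, ..., m-1 (cyclically);  *)
(* every crossing is met exactly twice, [mate k] is the other passage       *)
(* through the same crossing.  For each passage k:                          *)
(*   is_real k : the crossing is real (otherwise virtual);                  *)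
(*   is_over k : (real crossings) we pass on the over-strand at k;          *)
(*   lr k      : the other string crosses our string from left to right    *)
(*               (w.r.t. the orientation) at passage k.                     *)
(* Planarity: the underlying 4-valent graph, with the rotation system       *)
(* forced by the transversal crossings and the lr data, is a plane map,     *)
(* i.e. (being connected) it has V - E + F = 2, with V = m/2, E = m.       *)

(* darts: (k, false) = incoming half-edge at passage k,
          (k, true)  = outgoing half-edge at passage k *)
Definition dart (m : nat) := ('I_m * bool)%type.

(* edge involution: out(k) <-> in(k+1) *)
Definition dart_edge (m : nat) (d : dart m) : dart m :=
  if d.2 then (ordS d.1, false) else (ord_pred d.1, true).

(* counterclockwise successor around the crossing *)
Definition dart_rot (m : nat) (mate : 'I_m -> 'I_m) (lr : 'I_m -> bool)
  (d : dart m) : dart m := (mate d.1, addb d.2 (lr d.1)).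

(* face permutation; its orbits are the faces (regions) of the diagram *)
Definition face_perm (m : nat) (mate : 'I_m -> 'I_m) (lr : 'I_m -> bool)
  (d : dart m) : dart m := dart_rot mate lr (dart_edge d).

Definition nfaces (m : nat) (mate : 'I_m -> 'I_m) (lr : 'I_m -> bool) : nat :=
  fcard (face_perm mate lr) (@predT (dart m)).

Record vkdiagram := VKDiagram {
  npass : nat;
  mate : 'I_npass -> 'I_npass;
  is_real : 'I_npass -> bool;
  is_over : 'I_npass -> bool;
  lr : 'I_npass -> bool;
  mate_inv : forall k, mate (mate k) = k;
  mate_neq : forall k, mate k != k;
  mate_real : forall k, is_real (mate k) = is_real k;
  mate_over : forall k, is_real k -> is_over (mate k) = ~~ is_over k;
  mate_lr : forall k, lr (mate k) = ~~ lr k;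
  vk_planar : npass = 0%N \/ nfaces mate lr = (npass./2 + 2)%N
}.

Section Invariants.
Variable D : vkdiagram.
Local Notation m := (npass D).
Local Open Scope ring_scope.

(* a real crossing is represented by its over-passage *)
Definition real_over (o : 'I_m) : bool := @is_real D o && @is_over D o.

(* sign of the real crossing with over-passage o: positive iff the
   under-string crosses the over-string from right to left *)
Definition csign (o : 'I_m) : int := if @lr D o then -1 else 1.

Definition pdist (a b : 'I_m) : nat := ((b + m - a) %% m)%N.

Definition on_path (o u k : 'I_m) : bool := (0 < pdist o k < pdist o u)%N.

Definition ind (o : 'I_m) : int :=
  \sum_(k : 'I_m | @is_real D k && on_path o (@mate D o) k)
     (if @lr D k then 1 else -1).

Definition J (n : int) : int :=
  \sum_(o : 'I_m | real_over o && (ind o == n)) csign o.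

(* total cyclic shift of bundle positions accumulated from the base point
   up to (not including) passage k *)
Definition mshift (k : 'I_m) : int :=
  \sum_(j : 'I_m | (j < k)%N && ~~ @is_real D j) (if @lr D j then -1 else 1).

(* label (in 1..r) of the component of L(D;r) occupying bundle position
   p (in 1..r) at passage k: the one that was at position label at the
   base point *)
Definition mcomp (r p : nat) (k : 'I_m) : nat :=
  (absz (modz (p%:Z - 1 - mshift k) r%:Z)).+1.

(* real crossings of L(D;r): (sign, over-component, under-component) *)
Definition multiplex_crossings (r : nat) : seq (int * nat * nat) :=
  [seq (csign o, mcomp r p o, mcomp r p (@mate D o))
     | o <- [seq o <- enum 'I_m | real_over o], p <- iota 1 r].

End Invariants.

Definition Lk (cr : seq (int * nat * nat)) (i j : nat) : int :=
  (\sum_(c <- cr | (c.1.2 == i) && (c.2 == j)) c.1.1)%R.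

From HB Require Import structures.
From mathcomp Require Import all_boot all_order all_algebra ring zify.
Import Order.TTheory GRing.Theory Num.Theory.
Local Open Scope ring_scope.

(* At a real crossing o, the stretch of the diagram running from o to its
   mate is a closed curve; by planarity it meets the rest of the diagram with
   algebraic intersection number zero.  So ind o, which counts only the real
   crossings met along that stretch, equals the signed count of the virtual
   crossings met along it, and that is exactly the cyclic shift of bundle
   positions accumulated between the two passages through o.  Hence the copy
   of o at bundle position p has K_i over K_j iff p carries K_i at the
   over-passage and ind o = i - j (mod r); exactly one p does the former,
   and summing over o gives the J_n with n = i - j (mod r).
   The vanishing intersection number is H^1(S^2) = 0 in combinatorial form:
   by Euler's formula the jumps across edges of functions that are constant
   on faces fill the whole space of edge functions satisfying the cocycle
   condition at every crossing, the indicator of the path from o to its mate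
   is such a cocycle, and pairing with the lr-side of each crossing kills
   every jump. *)

Lemma ordS_invariant_const {T : Type} {n : nat} (f : 'I_n -> T) :
  (forall k, f (ordS k) = f k) -> forall k k', f k = f k'.
Proof.
move=> fS.
have f_0 (k z : 'I_n) : val z = 0%N -> f k = f z.
  move=> z0; case: k => k; elim: k => [|k IHk] lt_k_n.
    by rewrite (_ : Ordinal lt_k_n = z) //; apply: val_inj.
  rewrite -(IHk (ltnW lt_k_n)) -[RHS]fS; apply: f_equal; apply: val_inj.
  by rewrite /= modn_small.
move=> k k'; have n_gt0 : (0 < n)%N by apply: leq_ltn_trans (ltn_ord k).
by rewrite (f_0 k (Ordinal n_gt0)) // (f_0 k' (Ordinal n_gt0)).
Qed.

Lemma sum_seq_pred1 (R : nmodType) (I : eqType) (s : seq I) (P : pred I) (x : I) (c : R) :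
  uniq s -> x \in s -> \sum_(y <- s | P y) (if x == y then c else 0) = if P x then c else 0.
Proof.
move=> s_uniq x_s; rewrite (big_rem x) // eqxx big1_seq ?Monoid.simpm // => y /andP [_].
by rewrite (mem_rem_uniq x s_uniq) inE eq_sym => /andP [/negbTE ->].
Qed.

Lemma modz_succ_eq (r : nat) (x : int) (q : nat) : (0 < r)%N -> (1 <= q <= r)%N ->
  ((absz ((x - 1) %% r%:Z)%Z).+1 == q) = (x == q%:Z %[mod r%:Z])%Z.
Proof.
move=> r_gt0 /andP [q_ge1 q_le_r].
have X_ge0 : (0 <= (x - 1) %% r%:Z)%Z by apply: modz_ge0; rewrite eqz_nat -lt0n.
have -> : ((absz ((x - 1) %% r%:Z)%Z).+1 == q) = ((x - 1) %% r%:Z == q%:Z - 1)%Z.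
  by move: X_ge0; case: ((x - 1) %% r%:Z)%Z => [n|n] //= _; apply/eqP/eqP; lia.
rewrite -[q%:Z - 1](@modz_small _ r%:Z); last by apply/andP; split; lia.
by rewrite eqz_modDr.
Qed.

Lemma sum_iota_mod (r : nat) (t c : int) : (0 < r)%N ->
  \sum_(p <- iota 1 r) (if (p%:Z == t %[mod r%:Z])%Z then c else 0) = c.
Proof.
move=> r_gt0; set q0 := (absz ((t - 1) %% r%:Z)%Z).+1.
have q0_r : (1 <= q0 <= r)%N.
  have : ((t - 1) %% r%:Z < r%:Z)%Z by apply: ltz_pmod; rewrite ltz_nat.
  have : (0 <= (t - 1) %% r%:Z)%Z by apply: modz_ge0; rewrite eqz_nat -lt0n.
  by rewrite /q0; case: ((t - 1) %% r%:Z)%Z => [n|n] //= _; lia.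
rewrite (eq_big_seq (fun p => if q0 == p then c else 0)) => [|p]; last first.
  rewrite mem_iota => p_r; rewrite modz_succ_eq // eq_sym; lia.
by rewrite sum_seq_pred1 ?iota_uniq // mem_iota; lia.
Qed.

Section Passages.
Context {D : vkdiagram}.
Local Notation m := (npass D).
Local Notation mate := (@mate D).

Lemma mate_inj : injective mate.
Proof. exact: can_inj (@mate_inv D). Qed.

Lemma pdistE (a b : 'I_m) :
  pdist a b = if (a <= b)%N then (b - a)%N else (b + m - a)%N.
Proof.
have lt_a := ltn_ord a; have lt_b := ltn_ord b.
rewrite /pdist; case: leqP => le_ab; last by rewrite modn_small //; lia.
by rewrite -addnBAC // modnDr modn_small //; lia.
Qed.

Lemma pdist_lt (a b : 'I_m) : (pdist a b < m)%N.
Proof. by rewrite pdistE; have := ltn_ord a; have := ltn_ord b; case: ifP; lia. Qed.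

Lemma pdist_eq0 (a b : 'I_m) : (pdist a b == 0%N) = (a == b).
Proof.
apply/eqP/eqP => [|->]; last by rewrite pdistE leqnn subnn.
have := ltn_ord a; have := ltn_ord b; rewrite pdistE => lt_b lt_a eq0.
by apply: val_inj => /=; move: eq0; case: ifP; lia.
Qed.

Lemma pdistnn (a : 'I_m) : pdist a a = 0%N.
Proof. by apply/eqP; rewrite pdist_eq0. Qed.

Lemma pdist_inj (a : 'I_m) : injective (pdist a).
Proof.
move=> b c; rewrite !pdistE => eq_bc; apply: val_inj => /=.
have := ltn_ord a; have := ltn_ord b; have := ltn_ord c; move: eq_bc.
by do 2 case: ifP; lia.
Qed.

Lemma pdist_pred (a k : 'I_m) :
  pdist a (ord_pred k) = if k == a then m.-1 else (pdist a k).-1.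
Proof.
have val_pred : nat_of_ord (ord_pred k) = if nat_of_ord k == 0%N then m.-1 else k.-1.
  case: k => -[|k] lt_k /=; first by rewrite add0n modn_small // prednK.
  by rewrite modnDr modn_small //; lia.
rewrite !pdistE val_pred -val_eqE /=; have := ltn_ord a; have := ltn_ord k.
by repeat case: ifP; lia.
Qed.

Lemma pdist_lt_mate (o k : 'I_m) :
  (pdist o k < pdist o (mate o))%N = (k == o) || on_path o (mate o) k.
Proof.
have u_gt0 : (0 < pdist o (mate o))%N by rewrite lt0n pdist_eq0 eq_sym mate_neq.
by rewrite /on_path [k == o]eq_sym -pdist_eq0; case: (pdist o k).
Qed.

Lemma on_pathE (o u j : 'I_m) : on_path o u j =
  if (o < u)%N then (o < j < u)%N else (u < o)%N && ((o < j) || (j < u))%N.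
Proof.
rewrite /on_path !pdistE; have := ltn_ord o; have := ltn_ord u; have := ltn_ord j.
by case: (ltngtP o u) => ?; case: (leqP o j) => ?; case: (leqP o u) => ? //= *; lia.
Qed.

End Passages.

Section FaceCohomology.
Variable F : fieldType.
Context {D : vkdiagram}.
Local Notation m := (npass D).
Local Notation mate := (@mate D).
Local Notation lr := (@lr D).
Local Notation edge := (@dart_edge m).
Local Notation rot := (dart_rot mate lr).
Local Notation face := (face_perm mate lr).

Lemma rot_rot d : rot (rot d) = (d.1, ~~ d.2).
Proof. by case: d => k b; rewrite /dart_rot /= mate_inv mate_lr; case: b; case: (lr k). Qed.

Lemma rot_inj : injective rot.
Proof.
move=> d d' /(congr1 (rot \o rot \o rot)) /=; rewrite !rot_rot /=.
by case: d => ? [] ; case: d' => ? [] /= [->].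
Qed.

Lemma edgeK : involutive edge.
Proof. by case=> k [] /=; rewrite /dart_edge /= ?ordSK ?ord_predK. Qed.

Lemma face_inj : injective face.
Proof. by move=> d d' /rot_inj /(can_inj edgeK). Qed.

Local Notation dart_fun := {ffun dart m -> F^o}.
Local Notation edge_fun := {ffun 'I_m -> F^o}.

Definition face_root := {d : dart m | froots face d}.

Definition face_of (d : dart m) : face_root :=
  exist _ (froot face d) (roots_root (fconnect_sym face_inj) d).

Definition face_lift (y : {ffun face_root -> F^o}) : dart_fun := [ffun d => y (face_of d)].

Fact face_lift_is_linear : linear face_lift.
Proof. by move=> a y y'; apply/ffunP => d; rewrite !ffunE. Qed.
HB.instance Definition _ :=
  GRing.isLinear.Build F _ _ _ face_lift face_lift_is_linear.

Definition face_funs : {vspace dart_fun} := (linfun face_lift @: fullv)%VS.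

Lemma face_funsP x d : x \in face_funs -> x (face d) = x d.
Proof.
case/memv_imgP => y _ ->; rewrite !lfunE !ffunE; apply: f_equal; apply: val_inj => /=.
by apply/esym/(fingraph.rootP (fconnect_sym face_inj)); apply: fconnect1.
Qed.

Lemma face_funs_rot x d : x \in face_funs -> x (rot d) = x (edge d).
Proof. by move=> x_face; rewrite -(face_funsP x (edge d) x_face) /face_perm edgeK. Qed.

Lemma dim_face_funs : \dim face_funs = nfaces mate lr.
Proof.
rewrite limg_dim_eq; last first.
  apply/eqP; rewrite capfv; apply/lker0P => y y' eq_yy'; apply/ffunP => r.
  have := congr1 (fun x : dart_fun => x (val r)) eq_yy'; rewrite /= !lfunE !ffunE.
  by have -> : face_of (val r) = r by apply: val_inj; apply/eqP; apply: (valP r).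
by rewrite dimvf /dim /= muln1 card_sig; apply: eq_card => d; rewrite !inE andbT.
Qed.

Definition jump (x : dart_fun) : edge_fun :=
  [ffun k => x (edge (k, true)) - x (k, true)].

Fact jump_is_linear : linear jump.
Proof. by move=> a x x'; apply/ffunP => k; rewrite !ffunE scalerBr opprD addrACA. Qed.
HB.instance Definition _ := GRing.isLinear.Build F _ _ _ jump jump_is_linear.

Definition cocycle_defect (c : edge_fun) : edge_fun :=
  [ffun k => (c k - c (ord_pred k)) + (c (mate k) - c (ord_pred (mate k)))].

Fact cocycle_defect_is_linear : linear cocycle_defect.
Proof.
move=> a c c'; apply/ffunP => k; rewrite !ffunE.
by rewrite /GRing.scale /=; ring.
Qed.
HB.instance Definition _ :=
  GRing.isLinear.Build F _ _ _ cocycle_defect cocycle_defect_is_linear.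

Definition cocycles : {vspace edge_fun} := lker (linfun cocycle_defect).

Lemma cocyclesP (c : edge_fun) :
  reflect (forall k, (c k - c (ord_pred k)) + (c (mate k) - c (ord_pred (mate k))) = 0)
          (c \in cocycles).
Proof.
rewrite memv_ker lfunE; apply: (iffP eqP) => [c0 k | c0].
  by have := congr1 (fun c : edge_fun => c k) c0; rewrite /= !ffunE.
by apply/ffunP => k; rewrite !ffunE c0.
Qed.

Lemma jump_face_funs_sub : (linfun jump @: face_funs <= cocycles)%VS.
Proof.
apply/subvP => _ /memv_imgP [x x_face ->]; apply/cocyclesP => k; rewrite !lfunE !ffunE.
rewrite /dart_edge /= !ord_predK; set j := mate k.
have := face_funs_rot x (k, false) x_face; have := face_funs_rot x (k, true) x_face.
have := face_funs_rot x (j, lr k) x_face; have := face_funs_rot x (j, ~~ lr k) x_face.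
rewrite /dart_rot /= /j mate_inv mate_lr -/j.
by case: (lr k) => /= -> -> -> ->; ring.
Qed.

Lemma face_funs_ker_jump : (face_funs :&: lker (linfun jump) <= <[[ffun=> 1 : F^o]]>)%VS.
Proof.
apply/subvP => x /memv_capP [x_face]; rewrite memv_ker lfunE => /eqP jump0.
have x_edge k : x (ordS k, false) = x (k, true).
  by have /eqP := congr1 (fun c : edge_fun => c k) jump0; rewrite /= !ffunE subr_eq0 => /eqP.
have x_flip k : x (k, true) = x (k, false).
  have x_rot d : x (rot d) = x d.
    by rewrite face_funs_rot //; case: d => i [];
      rewrite /dart_edge /= ?x_edge // -x_edge ord_predK.
  by have := x_rot (rot (k, false)); rewrite rot_rot x_rot.
have x_const := ordS_invariant_const _ (fun k => etrans (x_edge k) (x_flip k)).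
have [m0 | m_gt0] := posnP m.
  suff -> : x = 0 by apply: mem0v.
  by apply/ffunP => -[k b]; have := ltn_ord k; rewrite {2}m0.
suff -> : x = x (Ordinal m_gt0, false) *: [ffun=> 1] by apply/memvZ/memv_line.
apply/ffunP => -[k b]; rewrite !ffunE /GRing.scale /= mulr1.
by case: b; rewrite ?x_flip (x_const k (Ordinal m_gt0)).
Qed.

Definition crossing_rep := {k : 'I_m | (k < mate k)%N}.

Lemma card_crossing_rep : #|{: crossing_rep}| = m./2.
Proof.
rewrite card_sig; set A := [pred k : 'I_m | (k < mate k)%N].
suff AcA : #|[predC A]| = #|A| by rewrite -[in RHS](card_ord m) -(cardC A) AcA addnn doubleK.
rewrite -(card_image mate_inj); apply: eq_card => k; rewrite !inE.
apply/imageP/idP => [[k' k'A ->] | kA]; last first.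
  by exists (mate k); rewrite ?mate_inv // !inE /= mate_inv -leqNgt ltnW.
rewrite !inE /= -leqNgt in k'A; rewrite mate_inv ltn_neqAle k'A andbT.
by apply: contraNneq (mate_neq k') => /val_inj ->.
Qed.

Definition cocycle_coords (k0 : 'I_m) (c : edge_fun) : {ffun option crossing_rep -> F^o} :=
  [ffun a => if a is Some k then c (val k) - c (ord_pred (val k)) else c k0].

Fact cocycle_coords_is_linear k0 : linear (cocycle_coords k0).
Proof. by move=> a c c'; apply/ffunP => -[k|]; rewrite !ffunE /GRing.scale /=; ring. Qed.
HB.instance Definition _ k0 :=
  GRing.isLinear.Build F _ _ _ (cocycle_coords k0) (cocycle_coords_is_linear k0).

Lemma cocycle_coords_ker k0 : (cocycles :&: lker (linfun (cocycle_coords k0)) = 0)%VS.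
Proof.
apply/eqP; rewrite -subv0; apply/subvP => c /memv_capP [/cocyclesP c_cocycle].
rewrite memv_ker lfunE memv0 => /eqP coords0.
have coord a : cocycle_coords k0 c a = 0 by rewrite coords0 ffunE.
have step k : c k - c (ord_pred k) = 0.
  case: (ltngtP k (mate k)) => [lt_k | gt_k | /val_inj eq_k].
  - by have := coord (Some (exist _ k lt_k)); rewrite ffunE.
  - have lt_mk : (mate k < mate (mate k))%N by rewrite mate_inv.
    have := coord (Some (exist _ (mate k) lt_mk)); rewrite ffunE /= => step_mk.
    by have := c_cocycle k; rewrite step_mk addr0.
  - by have := mate_neq k; rewrite -eq_k eqxx.
have c_ordS k : c (ordS k) = c k.
  by have /eqP := step (ordS k); rewrite ordSK subr_eq0 => /eqP.
apply/eqP/ffunP => k; rewrite ffunE (ordS_invariant_const _ c_ordS k k0).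
by have := coord None; rewrite ffunE.
Qed.

Lemma dim_cocycles : (0 < m)%N -> (\dim cocycles <= m./2.+1)%N.
Proof.
move=> m_gt0; rewrite -(limg_dim_eq (cocycle_coords_ker (Ordinal m_gt0))).
apply: leq_trans (dimvS (subvf _)) _.
by rewrite dimvf /dim /= muln1 card_option card_crossing_rep.
Qed.

Lemma jump_face_funs : (0 < m)%N -> (linfun jump @: face_funs)%VS = cocycles.
Proof.
move=> m_gt0; apply/eqP; rewrite eqEdim jump_face_funs_sub /=.
have nfaces_m : nfaces mate lr = (m./2 + 2)%N.
  by case: (vk_planar D) => // m0; rewrite m0 in m_gt0.
have ker_le1 : (\dim (face_funs :&: lker (linfun jump)) <= 1)%N.
  by apply: leq_trans (dimvS face_funs_ker_jump) _; rewrite dim_vline leq_b1.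
rewrite -(leq_add2l (\dim (face_funs :&: lker (linfun jump)))).
rewrite limg_ker_dim dim_face_funs nfaces_m.
by apply: leq_trans (leq_add ker_le1 (dim_cocycles m_gt0)) _; rewrite add1n addn2.
Qed.

Definition lr_flux (c : edge_fun) : F :=
  \sum_j (if lr j then - c (ord_pred j) else c j).

Lemma lr_flux_jump x : x \in face_funs -> lr_flux (jump x) = 0.
Proof.
move=> x_face.
have term j : (if lr j then - jump x (ord_pred j) else jump x j)
              = x (mate j, true) - x (j, ~~ lr j).
  have := face_funs_rot x (j, ~~ lr j) x_face.
  rewrite !ffunE /dart_rot /dart_edge /= ord_predK.
  by case: (lr j) => /= ->; rewrite ?opprB.
have sum_mate : \sum_j x (mate j, true) = \sum_j x (j, true).
  by rewrite [RHS](reindex_inj mate_inj).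
have sum_side : \sum_j x (j, ~~ lr j) = \sum_j x (j, true).
  rewrite (reindex_inj mate_inj) [RHS](reindex_inj (@ord_pred_inj _)).
  apply: eq_bigr => k _; rewrite mate_lr negbK.
  exact: face_funs_rot x (k, false) x_face.
by rewrite /lr_flux (eq_bigr _ (fun j _ => term j)) sumrB sum_mate sum_side subrr.
Qed.

(* Edge k runs from passage k to passage k + 1. *)
Definition path_edges (o : 'I_m) : edge_fun :=
  [ffun k => (pdist o k < pdist o (mate o))%:R].

Lemma path_edges_step o k :
  path_edges o k - path_edges o (ord_pred k) = (k == o)%:R - (k == mate o)%:R.
Proof.
rewrite !ffunE pdist_pred.
have lt_u := pdist_lt o (mate o).
have u_gt0 : (0 < pdist o (mate o))%N by rewrite lt0n pdist_eq0 eq_sym mate_neq.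
have [-> | k_o] := eqVneq k o.
  rewrite eq_sym (negbTE (mate_neq o)) pdistnn.
  by rewrite u_gt0 (_ : (m.-1 < _)%N = false) //; lia.
have k_gt0 : (0 < pdist o k)%N by rewrite lt0n pdist_eq0 eq_sym.
have [-> | k_u] := eqVneq k (mate o).
  by rewrite ltnn (_ : (_.-1 < _)%N = true) //; lia.
have : pdist o k != pdist o (mate o) by apply: contra k_u => /eqP/pdist_inj ->.
by move=> ?; rewrite (_ : (_.-1 < _)%N = (pdist o k < pdist o (mate o))%N) ?subrr //; lia.
Qed.

Lemma path_edges_cocycle o : path_edges o \in cocycles.
Proof.
apply/cocyclesP => k; rewrite !path_edges_step (inj_eq mate_inj).
rewrite -[in mate k == o](mate_inv o) (inj_eq mate_inj).
by rewrite addrC subrKA subrr.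
Qed.

Lemma path_edgesE o k : path_edges o k = (k == o)%:R + (on_path o (mate o) k)%:R.
Proof.
rewrite ffunE pdist_lt_mate; have [-> | _] := eqVneq k o; last by rewrite add0r.
by rewrite /on_path pdistnn addr0.
Qed.

Lemma lr_flux_path_edges o :
  lr_flux (path_edges o) = \sum_(j | on_path o (mate o) j) (if lr j then -1 else 1).
Proof.
have pick (a : 'I_m) (g : 'I_m -> F) : \sum_j (j == a)%:R * g j = g a.
  by rewrite (bigD1 a) //= eqxx mul1r big1 ?addr0 // => j /negbTE ->; rewrite mul0r.
have term j : (if lr j then - path_edges o (ord_pred j) else path_edges o j) =
    (if on_path o (mate o) j then (if lr j then -1 else 1) else 0)
    + ((j == mate o)%:R * (if lr j then -1 else 0) + (j == o)%:R * (if lr j then 0 else 1)).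
  have -> : path_edges o (ord_pred j) = path_edges o j - ((j == o)%:R - (j == mate o)%:R).
    by rewrite -path_edges_step opprB addrC subrK.
  by rewrite path_edgesE; case: (on_path _ _ _); case: (lr j) => /=; ring.
rewrite /lr_flux (eq_bigr _ (fun j _ => term j)) big_split big_split /= !pick.
by rewrite -big_mkcond mate_lr; case: (lr o); rewrite /= ?mulr0 ?mul1r; ring.
Qed.

Lemma sum_lr_on_path_eq0 o :
  \sum_(j | on_path o (mate o) j) (if lr j then -1 else 1) = 0 :> F.
Proof.
have m_gt0 : (0 < m)%N by apply: leq_ltn_trans (ltn_ord o).
rewrite -lr_flux_path_edges.
have /(memv_imgP) [x x_face ->] : path_edges o \in (linfun jump @: face_funs)%VS.
  by rewrite jump_face_funs // path_edges_cocycle.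
by rewrite lfunE lr_flux_jump.
Qed.
End FaceCohomology.

Section Multiplexing.
Context {D : vkdiagram}.
Local Notation m := (npass D).
Local Notation mate := (@mate D).
Local Notation lr := (@lr D).
Local Notation is_real := (@is_real D).

Definition virtual_sum (c : 'I_m -> int) : int :=
  \sum_(j | ~~ is_real j) (if lr j then -1 else 1) * c j.

Lemma mshift_virtual_sum (k : 'I_m) : mshift k = virtual_sum (fun j => (j < k)%N%:R).
Proof.
rewrite /mshift /virtual_sum big_mkcondl; apply: eq_bigr => j _.
by case: (j < k)%N; rewrite ?mulr1 ?mulr0.
Qed.

Lemma virtual_sum_const a : virtual_sum (fun=> a) = 0.
Proof.
suff : virtual_sum (fun=> a) = - virtual_sum (fun=> a) by lia.
rewrite {1}/virtual_sum (reindex_inj mate_inj) -sumrN /=.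
apply: eq_big => [j | j _]; first by rewrite mate_real.
by rewrite mate_lr; case: (lr j); rewrite /= ?mulN1r ?mul1r ?opprK.
Qed.

Lemma ind_virtual_sum o : ind o = virtual_sum (fun j => (on_path o (mate o) j)%:R).
Proof.
have path0 : \sum_(j | on_path o (mate o) j) (if lr j then -1 else 1) = 0 :> int.
  apply: (@intr_inj rat); rewrite raddf_sum /= mulr0z -[RHS](sum_lr_on_path_eq0 rat o).
  by apply: eq_bigr => j _; case: (lr j).
rewrite (bigID is_real) /= in path0.
have -> : ind o = - \sum_(j | on_path o (mate o) j && is_real j) (if lr j then -1 else 1).
  rewrite /ind -sumrN; apply: eq_big => [j | j _]; first by rewrite andbC.
  by case: (lr j); rewrite ?opprK.
have -> : virtual_sum (fun j => (on_path o (mate o) j)%:R)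
          = \sum_(j | on_path o (mate o) j && ~~ is_real j) (if lr j then -1 else 1).
  rewrite (eq_bigl (fun j => ~~ is_real j && on_path o (mate o) j)) => [|j]; last exact: andbC.
  rewrite big_mkcondr /=.
  by apply: eq_bigr => j _; case: (on_path _ _ _); rewrite ?mulr1 ?mulr0.
by move/eqP: path0; rewrite addr_eq0 => /eqP ->; rewrite opprK.
Qed.

Lemma on_path_indicator (o u j : 'I_m) : j != o -> j != u ->
  (on_path o u j)%:R = (j < u)%N%:R - (j < o)%N%:R + (u < o)%N%:R :> int.
Proof.
rewrite on_pathE -!val_eqE /=.
by case: (ltngtP o u) => ?; case: (ltngtP j o) => ?; case: (ltngtP j u) => ? //=; lia.
Qed.

Lemma mshift_mate o : is_real o -> mshift (mate o) = mshift o + ind o.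
Proof.
move=> o_real; apply/eqP; rewrite -subr_eq0 -(virtual_sum_const (- (mate o < o)%N%:R)).
rewrite !mshift_virtual_sum ind_virtual_sum /virtual_sum -big_split -sumrB /=.
apply/eqP/eq_bigr => j j_virt.
have j_o : j != o by apply: contraNneq j_virt => ->.
have j_u : j != mate o by apply: contraNneq j_virt => ->; rewrite mate_real.
by rewrite (on_path_indicator _ _ _ j_o j_u); ring.
Qed.

Lemma mcomp_eq (r p q : nat) (k : 'I_m) : (0 < r)%N -> (1 <= q <= r)%N ->
  (mcomp r p k == q) = (p%:Z == q%:Z + mshift k %[mod r%:Z])%Z.
Proof.
move=> r_gt0 q_r; rewrite /mcomp addrAC modz_succ_eq //.
by rewrite -(eqz_modDr (mshift k)) subrK.
Qed.

Lemma sum_multiplex_copies (r i j : nat) (o : 'I_m) (c : int) :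
  (0 < r)%N -> (1 <= i <= r)%N -> (1 <= j <= r)%N -> is_real o ->
  \sum_(p <- iota 1 r) (if (mcomp r p o == i) && (mcomp r p (mate o) == j) then c else 0)
  = if (ind o == i%:Z - j%:Z %[mod r%:Z])%Z then c else 0.
Proof.
move=> r_gt0 i_r j_r o_real.
rewrite -[RHS](sum_iota_mod r (i%:Z + mshift o) _ r_gt0); apply: eq_bigr => p _.
rewrite !mcomp_eq // mshift_mate // !eqz_mod_dvd.
have [over_i | //] := boolP (r%:Z %| p%:Z - (i%:Z + mshift o))%Z.
have -> : p%:Z - (j%:Z + (mshift o + ind o))
          = (p%:Z - (i%:Z + mshift o)) + - (ind o - (i%:Z - j%:Z)) by ring.
by rewrite (rpredDl _ over_i) rpredN.
Qed.

Lemma mem_ind_window (o : 'I_m) : ind o \in [seq k%:Z - m%:Z | k <- iota 0 (2 * m).+1].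
Proof.
have ind_le : `|ind o| <= m%:Z.
  rewrite /ind big_mkcond /=; apply: le_trans (ler_norm_sum _ _ _) _.
  apply: (@le_trans _ _ (\sum_(k : 'I_m) 1)).
    by apply: ler_sum => k _; case: (_ && _); case: (lr k).
  by rewrite sumr_const card_ord; lia.
apply/mapP; exists (absz (ind o + m%:Z)); last lia.
by rewrite mem_iota add0n ltnS; lia.
Qed.

End Multiplexing.

Theorem theorem1p2 (D : vkdiagram) (r i j : nat) :
  (2 <= r)%N -> (1 <= i <= r)%N -> (1 <= j <= r)%N -> i != j ->
  Lk (multiplex_crossings D r) i j =
  (\sum_(n <- [seq (k%:Z - (npass D)%:Z)%R | k <- iota 0 (2 * npass D).+1]
          | (n == (i%:Z - j%:Z)%R %[mod r%:Z])%Z) J D n)%R.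
Proof.
move=> r_ge2 i_r j_r _; have r_gt0 : (0 < r)%N by apply: ltnW.
have window_uniq : uniq [seq (k%:Z - (npass D)%:Z)%R | k <- iota 0 (2 * npass D).+1].
  by rewrite map_inj_uniq ?iota_uniq // => a b /addIr [].
rewrite /Lk /multiplex_crossings big_mkcond big_allpairs_dep /= big_filter.
under eq_bigr => o /andP [o_real _] do rewrite sum_multiplex_copies //.
rewrite /J; under [RHS]eq_bigr do rewrite big_mkcondr.
rewrite exchange_big big_enum_cond; apply: eq_big => [o | o _]; first by rewrite inE.
by rewrite sum_seq_pred1 // mem_ind_window.
Qed.
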